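(* Let $K$ be a field, let $r, p$ be nonnegative integers and $s, n, q, m$ positive integers. Suppose there exist an $[p, q, m]$-formula and a $[1, q, m]$-formula over $K$ which are amicable. Then, if an $[r+1, s, n]$-formula exists over $K$, an $[r+p,\; sq,\; nm]$-formula exists over $K$.
   Context: For nonnegative integers $r$ and positive integers $s, n$, a sum-of-squares formula of size $[r,s,n]$ (an $[r,s,n]$-formula) over a field $K$ is an identity $(x_1^2+\cdots+x_r^2)(y_1^2+\cdots+y_s^2) = z_1^2+\cdots+z_n^2$ in the polynomial ring over $K$ in independent indeterminates $x_1,\dots,x_r,y_1,\dots,y_s$, where each $z_k$ is a bilinear form in $X=(x_1,\dots,x_r)$ and $Y=(y_1,\dots,y_s)$ with coefficients in $K$. Writing $Z = (x_1A_1+\cdots+x_rA_r)Y$ with $n\times s$ matrices $A_i$ over $K$, such a formula is the same as a system of $n\times s$ matrices $A_1,\dots,A_r$ over $K$ satisfying the Hurwitz equations: $A_i^{\mathsf T}A_i = 1_s$ for all $i$, and $A_i^{\mathsf T}A_j + A_j^{\mathsf T}A_i = 0$ for all $i\neq j$. A $[p,s,n]$-formula given by $n\times s$ matrices $A_1,\dots,A_p$ and a $[q,s,n]$-formula given by $n\times s$ matrices $B_1,\dots,B_q$ (both systems satisfying the Hurwitz equations) are called amicable if $A_i^{\mathsf T}B_k = B_k^{\mathsf T}A_i$ for every $1\le i\le p$ and $1\le k\le q$. *)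

From HB Require Import structures.
From mathcomp Require Import all_boot all_order all_algebra.
Set Implicit Arguments. Unset Strict Implicit. Unset Printing Implicit Defensive.
Import GRing.Theory.
Local Open Scope ring_scope.

Definition hurwitz (K : fieldType) (r s n : nat) (A : 'I_r -> 'M[K]_(n, s)) : Prop :=
  (forall i, (A i)^T *m A i = 1%:M) /\
  (forall i j, i != j -> (A i)^T *m A j + (A j)^T *m A i = 0).

Definition sos_formula_exists (K : fieldType) (r s n : nat) : Prop :=
  exists A : 'I_r -> 'M[K]_(n, s), hurwitz A.

Definition amicable (K : fieldType) (p q s n : nat)
  (A : 'I_p -> 'M[K]_(n, s)) (B : 'I_q -> 'M[K]_(n, s)) : Prop :=
  hurwitz A /\ hurwitz B /\
  (forall i k, (A i)^T *m B k = (B k)^T *m A i).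

(** The tensor product is multiplicative and commutes with transposition, so
    (X ⊗ Y)ᵀ (X' ⊗ Y') = XᵀX' ⊗ YᵀY'.  Tensoring the Hurwitz system C₁..C_r of
    the [r+1,s,n]-formula with the single matrix B of the [1,q,m]-formula, and
    the remaining matrix C₀ with the system A₁..A_p of the [p,q,m]-formula,
    gives r + p matrices of size nm × sq that each satisfy the orthogonality
    equation.  Within each family anticommutation is inherited from one tensor
    factor; between the families, amicability BᵀAᵢ = AᵢᵀB lets the cross terms
    factor as (CⱼᵀC₀ + C₀ᵀCⱼ) ⊗ BᵀAᵢ = 0. *)

From mathcomp Require Import all_boot all_order all_algebra.
From mathcomp Require Import mxtens.
Set Implicit Arguments. Unset Strict Implicit. Unset Printing Implicit Defensive.
Import GRing.Theory.
Local Open Scope ring_scope.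

Section TensorProduct.

Variable R : comPzRingType.
Implicit Types m n p q : nat.

Lemma tensmxDl m n p q (X Y : 'M[R]_(m, n)) (Z : 'M[R]_(p, q)) :
  (X + Y) *t Z = X *t Z + Y *t Z.
Proof. by apply/matrixP=> i j; rewrite !mxE mulrDl. Qed.

Lemma tensmxDr m n p q (X : 'M[R]_(m, n)) (Y Z : 'M[R]_(p, q)) :
  X *t (Y + Z) = X *t Y + X *t Z.
Proof. by apply/matrixP=> i j; rewrite !mxE mulrDr. Qed.

Lemma tensmx11 n m : (1%:M : 'M[R]_n) *t (1%:M : 'M[R]_m) = 1%:M.
Proof.
apply/matrixP=> i j.
case: (mxtens_indexP i) => i0 i1; case: (mxtens_indexP j) => j0 j1.
rewrite tensmxE !mxE (inj_eq (can_inj (@mxtens_indexK n m))) xpair_eqE.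
by rewrite -natrM mulnb.
Qed.

Lemma trmx_tens_mul m n p q m' p'
    (X : 'M[R]_(m, n)) (Y : 'M[R]_(p, q)) (X' : 'M[R]_(m, m')) (Y' : 'M[R]_(p, p')) :
  (X *t Y)^T *m (X' *t Y') = (X^T *m X') *t (Y^T *m Y').
Proof. by rewrite trmx_tens tensmx_mul. Qed.

Lemma tensmx_orthogonal m n p q (X : 'M[R]_(m, n)) (Y : 'M[R]_(p, q)) :
  X^T *m X = 1%:M -> Y^T *m Y = 1%:M -> (X *t Y)^T *m (X *t Y) = 1%:M.
Proof. by move=> oX oY; rewrite trmx_tens_mul oX oY tensmx11. Qed.

Lemma tensmx_anticommute_l m n p q (X X' : 'M[R]_(m, n)) (Y Y' : 'M[R]_(p, q)) :
  X^T *m X' + X'^T *m X = 0 -> Y^T *m Y' = Y'^T *m Y ->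
  (X *t Y)^T *m (X' *t Y') + (X' *t Y')^T *m (X *t Y) = 0.
Proof.
by move=> aX cY; rewrite !trmx_tens_mul cY -tensmxDl aX tens0mx.
Qed.

Lemma tensmx_anticommute_r m n p q (X X' : 'M[R]_(m, n)) (Y Y' : 'M[R]_(p, q)) :
  X^T *m X' = X'^T *m X -> Y^T *m Y' + Y'^T *m Y = 0 ->
  (X *t Y)^T *m (X' *t Y') + (X' *t Y')^T *m (X *t Y) = 0.
Proof.
by move=> cX aY; rewrite !trmx_tens_mul cX -tensmxDr aY tensmx0.
Qed.

End TensorProduct.

Section HurwitzSystems.

Variables (K : fieldType) (s n : nat).
Implicit Types r p : nat.

Lemma hurwitz_comp r r' (A : 'I_r -> 'M[K]_(n, s)) (f : 'I_r' -> 'I_r) :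
  injective f -> hurwitz A -> hurwitz (A \o f).
Proof.
move=> inj_f [oA aA]; split=> [i|i j ij]; first exact: oA.
by apply: aA; rewrite (inj_eq inj_f).
Qed.

Definition cat_fun T r p (X : 'I_r -> T) (Y : 'I_p -> T) (k : 'I_(r + p)) : T :=
  match split k with inl i => X i | inr j => Y j end.

Lemma hurwitz_cat r p (X : 'I_r -> 'M[K]_(n, s)) (Y : 'I_p -> 'M[K]_(n, s)) :
  hurwitz X -> hurwitz Y ->
  (forall i j, (X i)^T *m Y j + (Y j)^T *m X i = 0) ->
  hurwitz (cat_fun X Y).
Proof.
move=> [oX aX] [oY aY] aXY; split=> [k|k k'].
  by rewrite /cat_fun; case: (split k).
rewrite -(inj_eq (can_inj (@splitK r p))) /cat_fun.
case: (split k) => [i|j]; case: (split k') => [i'|j'] ne.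
- by apply: aX; apply: contraNneq ne => ->.
- exact: aXY.
- by rewrite addrC.
- by apply: aY; apply: contraNneq ne => ->.
Qed.

Variables (q m : nat).

Lemma hurwitz_tensr r (C : 'I_r -> 'M[K]_(n, s)) (Y : 'M[K]_(m, q)) :
  hurwitz C -> Y^T *m Y = 1%:M -> hurwitz (fun i => C i *t Y).
Proof.
move=> [oC aC] oY; split=> [i|i j ij]; first exact: tensmx_orthogonal.
exact: tensmx_anticommute_l (aC _ _ ij) _.
Qed.

Lemma hurwitz_tensl p (X : 'M[K]_(n, s)) (A : 'I_p -> 'M[K]_(m, q)) :
  X^T *m X = 1%:M -> hurwitz A -> hurwitz (fun i => X *t A i).
Proof.
move=> oX [oA aA]; split=> [i|i j ij]; first exact: tensmx_orthogonal.
exact: tensmx_anticommute_r _ (aA _ _ ij).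
Qed.

End HurwitzSystems.

Theorem mainTheorem2 (K : fieldType) (r p s n q m : nat)
  (hs : (0 < s)%N) (hn : (0 < n)%N) (hq : (0 < q)%N) (hm : (0 < m)%N) :
  (exists (A : 'I_p -> 'M[K]_(m, q)) (B : 'I_1 -> 'M[K]_(m, q)), amicable A B) ->
  sos_formula_exists K r.+1 s n ->
  sos_formula_exists K (r + p) (s * q) (n * m).
Proof.
move=> [A [B [hA [[oB _] cAB]]]] [C hC].
exists (cat_fun (fun j => C (lift ord0 j) *t B ord0) (fun i => C ord0 *t A i)).
apply: hurwitz_cat.
- by apply: hurwitz_tensr (oB ord0); apply: hurwitz_comp hC; apply: lift_inj.
- exact: hurwitz_tensl (hC.1 ord0) hA.
- move=> j i; apply: tensmx_anticommute_l; last by rewrite cAB.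
  by apply: hC.2; rewrite eq_sym neq_lift.
Qed.
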